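(* Let $r,K,\mu$ satisfy Assumption 1, $a>0$ and $c\in\mathbb R$. If $(w,m)\in C^0([-a,a])^2$ is a solution of the localized problem (P$_a$), then $w(x)>0$ and $m(x)>0$ for all $x\in[-a,a)$.
   Context: Assumption 1: $r\in(1,\infty)$, $\mu\in\left(0,\min\left(\frac r2,1-\frac1r,1-K,K\right)\right)$, $K\in\left(0,\min\left(1,\frac{r}{r-1}\left(1-\frac{\mu}{1-\mu}\right)\right)\right)$. $f_w(w,m):=w(1-(w+m))+\mu(m-w)$, $f_m(w,m):=rm\left(1-\frac{w+m}{K}\right)+\mu(w-m)$; $(w^*,m^* )$ is the unique solution in $(0,1)\times(0,K)$ of $f_w=f_m=0$. The localized problem (P$_a$) for given $a>0$, $c\in\mathbb R$: $w,m\in C^0([-a,a])$ satisfy, in the weak (distributional) sense on $(-a,a)$, $-cw'-w''=f_w(w,m)\chi_{w\ge0}\chi_{m\ge0}$, $-cm'-m''=f_m(w,m)\chi_{w\ge0}\chi_{m\ge0}$, with boundary conditions $w(-a)=w^*$, $m(-a)=m^*$, $w(a)=m(a)=0$; here $\chi_{w\ge0}$ denotes the indicator of the set where $w\ge0$. *)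

From Stdlib Require Import Reals Lra List.
Open Scope R_scope.

Definition f_w (mu w m : R) : R := w * (1 - (w + m)) + mu * (m - w).
Definition f_m (r K mu w m : R) : R := r * m * (1 - (w + m) / K) + mu * (w - m).

Definition assumption1 (r K mu : R) : Prop :=
  1 < r /\
  0 < mu /\ mu < r / 2 /\ mu < 1 - 1 / r /\ mu < 1 - K /\ mu < K /\
  0 < K /\ K < 1 /\ K < r / (r - 1) * (1 - mu / (1 - mu)).

Definition is_coexistence_state (r K mu ws ms : R) : Prop :=
  (0 < ws < 1 /\ 0 < ms < K /\ f_w mu ws ms = 0 /\ f_m r K mu ws ms = 0) /\
  (forall w m, 0 < w < 1 -> 0 < m < K -> f_w mu w m = 0 -> f_m r K mu w m = 0 ->
     w = ws /\ m = ms).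

Definition continuous_on_closed (f : R -> R) (lo hi : R) : Prop :=
  forall x, lo <= x <= hi ->
    forall eps, 0 < eps -> exists delta, 0 < delta /\
      forall y, lo <= y <= hi -> Rabs (y - x) < delta -> Rabs (f y - f x) < eps.

(* Test functions: C^infinity functions with compact support in (lo, hi).
   D n is the n-th derivative of D 0 = phi. *)
Definition test_function (lo hi : R) (D : nat -> R -> R) : Prop :=
  (forall n x, derivable_pt_lim (D n) x (D (S n) x)) /\
  exists l h, lo < l /\ h < hi /\ forall x, (x < l \/ h < x) -> D O x = 0.

(* Henstock-Kurzweil (gauge) integral on [lo,hi]; it agrees with the
   Lebesgue integral on Lebesgue-integrable functions (used here for bounded
   measurable integrands).  A tagged partition is a list of (l, t, r)
   triples with consecutive subintervals [l,r] containing the tag t. *)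
Fixpoint delta_fine (delta : R -> R) (lo hi : R) (P : list (R * R * R)) : Prop :=
  match P with
  | nil => lo = hi
  | (l, t, r) :: P' =>
      l = lo /\ l <= t <= r /\ l < r /\
      t - delta t < l /\ r < t + delta t /\ delta_fine delta r hi P'
  end.

Fixpoint riemann_sum (f : R -> R) (P : list (R * R * R)) : R :=
  match P with
  | nil => 0
  | (l, t, r) :: P' => f t * (r - l) + riemann_sum f P'
  end.

Definition HK_integral (f : R -> R) (lo hi I : R) : Prop :=
  forall eps, 0 < eps -> exists delta : R -> R, (forall x, 0 < delta x) /\
    forall P, delta_fine delta lo hi P -> Rabs (riemann_sum f P - I) < eps.

Definition chi_nonneg (x : R) : R := if Rle_dec 0 x then 1 else 0.

(* Weak (distributional) formulation on (lo,hi) of  -c u' - u'' = F :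
   for every test function phi,  int u (c phi' - phi'') = int F phi. *)
Definition weak_solution (c : R) (u F : R -> R) (lo hi : R) : Prop :=
  forall D, test_function lo hi D ->
    exists I, HK_integral (fun x => u x * (c * D 1%nat x - D 2%nat x)) lo hi I /\
              HK_integral (fun x => F x * D O x) lo hi I.

Definition solves_Pa (r K mu ws ms a c : R) (w m : R -> R) : Prop :=
  continuous_on_closed w (- a) a /\ continuous_on_closed m (- a) a /\
  weak_solution c w (fun x => f_w mu (w x) (m x) * chi_nonneg (w x) * chi_nonneg (m x)) (- a) a /\
  weak_solution c m (fun x => f_m r K mu (w x) (m x) * chi_nonneg (w x) * chi_nonneg (m x)) (- a) a /\
  w (- a) = ws /\ m (- a) = ms /\ w a = 0 /\ m a = 0.

From Stdlib Require Import Reals Lra List ClassicalEpsilon FunctionalExtensionality Classical.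
From Coquelicot Require Import Coquelicot.
Open Scope R_scope.

(* For continuous data the weak formulation is equivalent to the classical
   representation [u = A + B k + P G], where [k] is the nonconstant solution of
   [-c u' - u'' = 0] and [P G] the variation-of-constants solution: [u - P G] is
   orthogonal to every test function whose moments against [1] and [k] vanish
   (those are exactly [c phi' - phi''] for test functions [phi]), and two fixed
   bumps absorb the moments of an arbitrary test function (du Bois-Reymond).
   Test functions are built from [exp (-1/x)]; the gauge integrals of the weak
   formulation are Riemann integrals for continuous integrands.

   Nonnegativity: on a maximal interval where a component is negative its
   truncated reaction term vanishes, so there it is a combination of [1] and [k]
   vanishing at both ends, hence zero.

   Positivity: each component satisfies [-c u' - u'' >= - C u] with [u >= 0].
   At an interior zero [u' = 0], and the representation bounds [u] to the left
   by [step^2 C' max u], so [u] vanishes on an interval of fixed length [step];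
   iterating reaches [x = -a], where [u > 0]. *)

(* [auto_derive] leaves the derivatives of abstract functions as [Derive] terms;
   this replaces them by the values recorded in [is_derive] hypotheses. *)
Ltac use_derive_hyps :=
  repeat match goal with
  | H : is_derive ?f ?x ?l |- context [Derive ?g ?x] =>
      replace (Derive g x) with l by (symmetry; exact (is_derive_unique f x l H))
  end.

Ltac auto_derive_hyps :=
  auto_derive;
  [ repeat split; try (eexists; eassumption); try lra
  | use_derive_hyps ].

(** * Smooth bump functions *)

Fixpoint poly_eval (p : list R) (y : R) : R :=
  match p with nil => 0 | a :: q => a + y * poly_eval q y end.

Fixpoint poly_add (p q : list R) : list R :=
  match p, q with
  | nil, _ => q
  | _, nil => p
  | a :: p', b :: q' => (a + b) :: poly_add p' q'
  end.

Fixpoint poly_deriv (p : list R) : list R :=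
  match p with nil => nil | a :: q => poly_add q (0 :: poly_deriv q) end.

Fixpoint poly_norm (p : list R) : R :=
  match p with nil => 0 | a :: q => Rabs a + poly_norm q end.

Lemma poly_eval_add p q y : poly_eval (poly_add p q) y = poly_eval p y + poly_eval q y.
Proof.
  revert q; induction p as [|a p IH]; intros [|b q]; simpl; try ring.
  rewrite IH; ring.
Qed.

Lemma poly_eval_opp p y : poly_eval (map Ropp p) y = - poly_eval p y.
Proof. induction p as [|a p IH]; simpl; [ring|]. rewrite IH; ring. Qed.

Lemma is_derive_poly_eval p (y : R) : is_derive (poly_eval p) y (poly_eval (poly_deriv p) y).
Proof.
  induction p as [|a p IH]; simpl.
  - apply (is_derive_const 0).
  - rewrite poly_eval_add.
    apply (is_derive_ext (fun y => a + y * poly_eval p y)); [reflexivity|].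
    auto_derive_hyps. simpl; ring.
Qed.

Lemma poly_norm_ge0 p : 0 <= poly_norm p.
Proof. induction p; simpl; [lra|]. pose proof (Rabs_pos a); lra. Qed.

Lemma poly_eval_bound p y : 1 <= y -> Rabs (poly_eval p y) <= poly_norm p * y ^ length p.
Proof.
  intros Hy. induction p as [|a p IH]; simpl.
  - rewrite Rabs_R0; lra.
  - assert (Hpow : 1 <= y ^ length p) by (apply pow_R1_Rle; lra).
    pose proof (Rabs_pos a). pose proof (poly_norm_ge0 p).
    eapply Rle_trans; [apply Rabs_triang|].
    rewrite Rabs_mult, (Rabs_right y) by lra.
    assert (y * Rabs (poly_eval p y) <= y * (poly_norm p * y ^ length p))
      by (apply Rmult_le_compat_l; lra).
    assert (1 <= y * y ^ length p) by (rewrite <- (Rmult_1_r 1); apply Rmult_le_compat; lra).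
    assert (Rabs a * 1 <= Rabs a * (y * y ^ length p)) by (apply Rmult_le_compat_l; lra).
    nra.
Qed.

Lemma pow_div_fact_le_exp x n : 0 <= x -> x ^ n / INR (Factorial.fact n) <= exp x.
Proof.
  intros Hx. eapply Rle_trans; [|apply (exp_ge_taylor x n Hx)].
  assert (Hterm : forall k, 0 <= x ^ k / INR (Factorial.fact k)).
  { intros k. apply Rdiv_le_0_compat; [apply pow_le; lra|apply INR_fact_lt_0]. }
  destruct n as [|n]; simpl; [lra|].
  pose proof (cond_pos_sum _ n Hterm). simpl in *. lra.
Qed.

Lemma poly_exp_decay p eps : 0 < eps ->
  exists Y, 0 < Y /\ forall y, Y < y -> Rabs (poly_eval p y) * exp (- y) * y < eps.
Proof.
  intros Heps.
  set (N := length p). set (C := poly_norm p * INR (Factorial.fact (S (S N)))).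
  assert (HC : 0 <= C) by (apply Rmult_le_pos; [apply poly_norm_ge0|apply pos_INR]).
  exists (Rmax 1 (C / eps)). split; [pose proof (Rmax_l 1 (C / eps)); lra|].
  intros y Hy. pose proof (Rmax_l 1 (C / eps)). pose proof (Rmax_r 1 (C / eps)).
  assert (HyN : 0 < y ^ N) by (apply pow_lt; lra).
  assert (Hexp : y ^ N * y * y / INR (Factorial.fact (S (S N))) <= exp y).
  { replace (y ^ N * y * y) with (y ^ S (S N)) by (simpl; ring).
    apply pow_div_fact_le_exp; lra. }
  assert (Hinv : exp (- y) <= INR (Factorial.fact (S (S N))) / (y ^ N * y * y)).
  { rewrite exp_Ropp. pose proof (INR_fact_lt_0 (S (S N))).
    replace (INR (Factorial.fact (S (S N))) / (y ^ N * y * y))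
      with (/ (y ^ N * y * y / INR (Factorial.fact (S (S N))))) by (field; lra).
    apply Rinv_le_contravar; [|exact Hexp].
    apply Rdiv_lt_0_compat; [repeat apply Rmult_lt_0_compat|]; lra. }
  assert (Hpoly := poly_eval_bound p y ltac:(lra)). fold N in Hpoly.
  apply Rle_lt_trans with (C / y).
  - replace (C / y) with (poly_norm p * y ^ N * (INR (Factorial.fact (S (S N))) / (y ^ N * y * y)) * y)
      by (unfold C; field; lra).
    apply Rmult_le_compat_r; [lra|].
    apply Rmult_le_compat; auto using Rabs_pos; left; apply exp_pos.
  - apply (Rmult_lt_reg_r y); [lra|]. unfold Rdiv. rewrite Rmult_assoc, Rinv_l by lra.
    apply (Rmult_lt_reg_l (/ eps)); [apply Rinv_0_lt_compat; lra|].
    replace (/ eps * (C * 1)) with (C / eps) by (unfold Rdiv; ring).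
    replace (/ eps * (eps * y)) with y by (field; lra). lra.
Qed.

Fixpoint flat_poly (n : nat) : list R :=
  match n with
  | O => 1 :: nil
  | S n => 0 :: 0 :: poly_add (flat_poly n) (map Ropp (poly_deriv (flat_poly n)))
  end.

(* [flat n] is the n-th derivative of the function equal to [exp (-1/x)] for
   [x > 0] and to [0] for [x <= 0]. *)
Definition flat (n : nat) (x : R) : R :=
  if Rlt_dec 0 x then poly_eval (flat_poly n) (/ x) * exp (- / x) else 0.

Lemma is_derive_poly_inv_exp p (x : R) : 0 < x ->
  is_derive (fun t => poly_eval p (/ t) * exp (- / t)) x
    (poly_eval (0 :: 0 :: poly_add p (map Ropp (poly_deriv p))) (/ x) * exp (- / x)).
Proof.
  intros Hx. assert (Hp := is_derive_poly_eval p (/ x)).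
  auto_derive_hyps. simpl. rewrite poly_eval_add, poly_eval_opp. field. lra.
Qed.

Lemma is_derive_flat_at_0 n : is_derive (flat n) 0 (flat (S n) 0).
Proof.
  unfold flat at 2. destruct (Rlt_dec 0 0); [lra|].
  apply is_derive_Reals. intros eps Heps.
  destruct (poly_exp_decay (flat_poly n) eps Heps) as [Y [HY HYdecay]].
  assert (Hd : 0 < / Y) by (apply Rinv_0_lt_compat; lra).
  exists (mkposreal _ Hd). intros h Hh0 Hh. simpl in Hh.
  rewrite Rplus_0_l. unfold flat. destruct (Rlt_dec 0 0); [lra|].
  destruct (Rlt_dec 0 h) as [Hpos|Hneg].
  - rewrite Rabs_right in Hh by lra.
    assert (HYh : Y < / h).
    { rewrite <- (Rinv_inv Y). apply Rinv_lt_contravar; [nra|exact Hh]. }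
    replace ((poly_eval (flat_poly n) (/ h) * exp (- / h) - 0) / h - 0)
      with (poly_eval (flat_poly n) (/ h) * exp (- / h) * / h) by (field; lra).
    assert (Hinvh : 0 < / h) by (apply Rinv_0_lt_compat; lra).
    rewrite !Rabs_mult, (Rabs_right (exp _)), (Rabs_right (/ h)) by (left; first [apply exp_pos | exact Hinvh]).
    exact (HYdecay _ HYh).
  - replace ((0 - 0) / h - 0) with 0 by (field; auto). rewrite Rabs_R0; lra.
Qed.

Lemma is_derive_flat n (x : R) : is_derive (flat n) x (flat (S n) x).
Proof.
  destruct (Rtotal_order x 0) as [Hx|[->|Hx]].
  - apply (is_derive_ext_loc (fun _ => 0)); [|unfold flat; destruct Rlt_dec; [lra|apply (is_derive_const 0)]].
    apply (filter_imp (fun u => u < 0)); [|exact (open_lt 0 x Hx)].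
    intros t Ht. unfold flat. destruct Rlt_dec; [lra|reflexivity].
  - apply is_derive_flat_at_0.
  - apply (is_derive_ext_loc (fun t => poly_eval (flat_poly n) (/ t) * exp (- / t))).
    + apply (filter_imp (fun u => 0 < u)); [|exact (open_gt 0 x Hx)].
      intros t Ht. unfold flat. destruct Rlt_dec; [reflexivity|lra].
    + unfold flat. destruct Rlt_dec; [|lra]. apply is_derive_poly_inv_exp; exact Hx.
Qed.

Lemma flat0_pos x : 0 < x -> 0 < flat 0 x.
Proof. intros Hx. unfold flat. destruct Rlt_dec; [|lra]. simpl. rewrite Rmult_0_r, Rplus_0_r, Rmult_1_l. apply exp_pos. Qed.

Lemma flat0_nonpos x : x <= 0 -> flat 0 x = 0.
Proof. intros Hx. unfold flat. destruct Rlt_dec; [lra|reflexivity]. Qed.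

Lemma flat0_ge0 x : 0 <= flat 0 x.
Proof. destruct (Rlt_dec 0 x); [left; apply flat0_pos | rewrite flat0_nonpos]; lra. Qed.

Definition derivative_chain (D : nat -> R -> R) : Prop :=
  forall n x, is_derive (D n) x (D (S n) x).

Fixpoint smooth_upto (n : nat) (f : R -> R) : Prop :=
  match n with
  | O => True
  | S n => (forall x, ex_derive f x) /\ smooth_upto n (Derive f)
  end.

Definition smooth (f : R -> R) : Prop := forall n, smooth_upto n f.

Lemma smooth_upto_S n f : smooth_upto (S n) f -> smooth_upto n f.
Proof.
  revert f; induction n as [|n IH]; intros f Hf; simpl in *; [exact I|].
  destruct Hf as [Hd Hs]. split; [exact Hd|]. apply IH, Hs.
Qed.

Lemma Derive_n_Derive f n x : Derive_n (Derive f) n x = Derive_n f (S n) x.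
Proof.
  revert x; induction n as [|n IH]; intros x; [reflexivity|].
  simpl. apply Derive_ext. exact IH.
Qed.

Lemma smooth_derivative_chain f : smooth f -> derivative_chain (Derive_n f).
Proof.
  intros Hf n. revert f Hf. induction n as [|n IH]; intros f Hf x.
  - apply Derive_correct, (Hf 1%nat).
  - assert (Hf' : smooth (Derive f)) by (intros k; exact (proj2 (Hf (S k)))).
    apply (is_derive_ext (Derive_n (Derive f) n)); [intros; apply Derive_n_Derive|].
    rewrite <- Derive_n_Derive. apply IH, Hf'.
Qed.

Lemma Derive_fun_ext f f' : (forall x, is_derive f x (f' x)) -> Derive f = f'.
Proof. intros Hf. apply functional_extensionality; intros x. apply is_derive_unique, Hf. Qed.

Lemma derivative_chain_smooth D k : derivative_chain D -> smooth (D k).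
Proof.
  intros HD n. revert k. induction n as [|n IH]; intros k; simpl; [exact I|].
  split; [intros x; exists (D (S k) x); apply HD|].
  rewrite (Derive_fun_ext (D k) (D (S k)) (HD k)). apply IH.
Qed.

Lemma smooth_upto_plus n f g :
  smooth_upto n f -> smooth_upto n g -> smooth_upto n (fun x => f x + g x).
Proof.
  revert f g; induction n as [|n IH]; intros f g Hf Hg; simpl in *; [exact I|].
  destruct Hf as [Hf1 Hf2], Hg as [Hg1 Hg2].
  assert (Hd : forall x, is_derive (fun x => f x + g x) x (Derive f x + Derive g x)).
  { intros x. apply (is_derive_plus f g); apply Derive_correct; auto. }
  split; [intros x; eexists; apply Hd|].
  replace (Derive (fun x => f x + g x)) with (fun x => Derive f x + Derive g x)
    by (symmetry; apply Derive_fun_ext, Hd).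
  apply IH; auto.
Qed.

Lemma smooth_upto_mult n f g :
  smooth_upto n f -> smooth_upto n g -> smooth_upto n (fun x => f x * g x).
Proof.
  revert f g; induction n as [|n IH]; intros f g Hf Hg; simpl; [exact I|].
  pose proof (smooth_upto_S _ _ Hf) as Hf0. pose proof (smooth_upto_S _ _ Hg) as Hg0.
  destruct Hf as [Hf1 Hf2], Hg as [Hg1 Hg2].
  assert (Hd : forall x, is_derive (fun x => f x * g x) x (Derive f x * g x + f x * Derive g x)).
  { intros x. apply (is_derive_mult f g); try (apply Derive_correct; auto).
    intros; apply Rmult_comm. }
  split; [intros x; eexists; apply Hd|].
  replace (Derive (fun x => f x * g x)) with (fun x => Derive f x * g x + f x * Derive g x)
    by (symmetry; apply Derive_fun_ext, Hd).
  apply smooth_upto_plus; apply IH; auto.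
Qed.

Lemma smooth_upto_scale_affine n f s a b :
  smooth_upto n f -> smooth_upto n (fun x => s * f (a * x + b)).
Proof.
  revert f s; induction n as [|n IH]; intros f s Hf; simpl; [exact I|].
  destruct Hf as [Hf1 Hf2].
  assert (Hd : forall x, is_derive (fun x => s * f (a * x + b)) x (s * a * Derive f (a * x + b))).
  { intros x. rewrite Rmult_assoc. apply is_derive_scal.
    apply (is_derive_comp f (fun x => a * x + b)); [apply Derive_correct, Hf1|].
    auto_derive; [exact I|ring]. }
  split; [intros x; eexists; apply Hd|].
  replace (Derive (fun x => s * f (a * x + b))) with (fun x => s * a * Derive f (a * x + b))
    by (symmetry; apply Derive_fun_ext, Hd).
  apply IH, Hf2.
Qed.

Definition vanishes_outside (f : R -> R) (l h : R) : Prop :=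
  forall x, x < l \/ h < x -> f x = 0.

Definition bump (x0 e x : R) : R := flat 0 (1 + (x - x0) / e) * flat 0 (1 - (x - x0) / e).

Lemma smooth_bump x0 e : smooth (bump x0 e).
Proof.
  assert (Hflat : smooth (flat 0)) by apply (derivative_chain_smooth flat 0 is_derive_flat).
  intros n. unfold bump. apply smooth_upto_mult.
  - replace (fun x => flat 0 (1 + (x - x0) / e))
      with (fun x => 1 * flat 0 (/ e * x + (1 - x0 / e)))
      by (apply functional_extensionality; intros x; rewrite Rmult_1_l; f_equal; unfold Rdiv; ring).
    apply smooth_upto_scale_affine, Hflat.
  - replace (fun x => flat 0 (1 - (x - x0) / e))
      with (fun x => 1 * flat 0 (- / e * x + (1 + x0 / e)))
      by (apply functional_extensionality; intros x; rewrite Rmult_1_l; f_equal; unfold Rdiv; ring).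
    apply smooth_upto_scale_affine, Hflat.
Qed.

Lemma bump_pos x0 e x : 0 < e -> x0 - e < x < x0 + e -> 0 < bump x0 e x.
Proof.
  intros He Hx. assert (Hq : -1 < (x - x0) / e < 1).
  { split; [apply Rlt_div_r|apply Rlt_div_l]; lra. }
  apply Rmult_lt_0_compat; apply flat0_pos; lra.
Qed.

Lemma bump_ge0 x0 e x : 0 <= bump x0 e x.
Proof. apply Rmult_le_pos; apply flat0_ge0. Qed.

Lemma bump_vanishes_outside x0 e : 0 < e -> vanishes_outside (bump x0 e) (x0 - e) (x0 + e).
Proof.
  intros He x Hx. unfold bump. destruct Hx as [Hx|Hx].
  - rewrite (flat0_nonpos (1 + _)); [ring|].
    assert ((x - x0) / e <= -1) by (apply Rle_div_l; lra). lra.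
  - rewrite (flat0_nonpos (1 - _)); [ring|].
    assert (1 <= (x - x0) / e) by (apply Rle_div_r; lra). lra.
Qed.

Definition C0 (f : R -> R) : Prop := forall x, continuous f x.

Lemma C0_const c : C0 (fun _ => c).
Proof. intros x. apply continuous_const. Qed.

Lemma C0_plus (f g : R -> R) : C0 f -> C0 g -> C0 (fun x => f x + g x).
Proof. intros Hf Hg x. apply (continuous_plus f g); auto. Qed.

Lemma C0_minus (f g : R -> R) : C0 f -> C0 g -> C0 (fun x => f x - g x).
Proof. intros Hf Hg x. apply (continuous_minus f g); auto. Qed.

Lemma C0_mult (f g : R -> R) : C0 f -> C0 g -> C0 (fun x => f x * g x).
Proof. intros Hf Hg x. apply (continuous_mult f g); auto. Qed.

Lemma C0_of_derive (f f' : R -> R) : (forall x, is_derive f x (f' x)) -> C0 f.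
Proof. intros Hd x. apply (ex_derive_continuous (K:=R_AbsRing) (V:=R_NormedModule)). exists (f' x). apply Hd. Qed.

Lemma C0_exp_scal c : C0 (fun x => exp (c * x)).
Proof. apply (C0_of_derive _ (fun x => c * exp (c * x))). intros x. auto_derive; [exact I|ring]. Qed.

Lemma C0_chain D n : derivative_chain D -> C0 (D n).
Proof. intros HD. apply (C0_of_derive _ (D (S n))), HD. Qed.

Lemma C0_bump x0 e : C0 (bump x0 e).
Proof. exact (C0_chain _ 0 (smooth_derivative_chain _ (smooth_bump x0 e))). Qed.

Ltac solve_C0 :=
  repeat match goal with
  | |- C0 (fun x => @?f x - @?g x) => apply (C0_minus f g)
  | |- C0 (fun x => @?f x + @?g x) => apply (C0_plus f g)
  | |- C0 (fun x => @?f x * @?g x) => apply (C0_mult f g)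
  | |- C0 (fun x => exp (?a * x)) => apply C0_exp_scal
  | |- C0 (fun _ => ?a) => apply C0_const
  | |- C0 (bump _ _) => apply C0_bump
  | |- C0 (fun x => ?f x) => change (C0 f)
  | H : C0 ?f |- C0 ?f => exact H
  | H : derivative_chain ?D |- C0 (?D ?n) => exact (C0_chain D n H)
  end.

(* Coquelicot states integral equations at the carrier of a normed module;
   [R_eq] restates such a goal at [R] so that [ring] and [lra] apply. *)
Ltac R_eq := match goal with |- @eq _ ?x ?y => change (@eq R x y) end.

Lemma ex_RInt_C0 (f : R -> R) a b : C0 f -> ex_RInt f a b.
Proof. intros Hf. apply (@ex_RInt_continuous R_CompleteNormedModule). intros; apply Hf. Qed.

Lemma RInt_plus_C0 (f g : R -> R) a b : C0 f -> C0 g ->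
  RInt (fun x => f x + g x) a b = RInt f a b + RInt g a b.
Proof. intros Hf Hg. exact (RInt_plus (V:=R_CompleteNormedModule) f g a b (ex_RInt_C0 f a b Hf) (ex_RInt_C0 g a b Hg)). Qed.

Lemma RInt_minus_C0 (f g : R -> R) a b : C0 f -> C0 g ->
  RInt (fun x => f x - g x) a b = RInt f a b - RInt g a b.
Proof. intros Hf Hg. exact (RInt_minus (V:=R_CompleteNormedModule) f g a b (ex_RInt_C0 f a b Hf) (ex_RInt_C0 g a b Hg)). Qed.

Lemma RInt_scal_C0 (f : R -> R) c a b : C0 f -> RInt (fun x => c * f x) a b = c * RInt f a b.
Proof. intros Hf. exact (RInt_scal (V:=R_CompleteNormedModule) f a b c (ex_RInt_C0 f a b Hf)). Qed.

Lemma RInt_const_R c a b : RInt (fun _ => c) a b = c * (b - a).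
Proof. rewrite (RInt_const (V:=R_CompleteNormedModule)). apply Rmult_comm. Qed.

Lemma RInt_Chasles_C0 (f : R -> R) a b c : C0 f -> RInt f a b + RInt f b c = RInt f a c.
Proof. intros Hf. exact (RInt_Chasles (V:=R_CompleteNormedModule) f a b c (ex_RInt_C0 f a b Hf) (ex_RInt_C0 f b c Hf)). Qed.

Lemma RInt_le_C0 (f g : R -> R) a b : a <= b -> C0 f -> C0 g ->
  (forall x, a <= x <= b -> f x <= g x) -> RInt f a b <= RInt g a b.
Proof. intros Hab Hf Hg Hle. apply RInt_le; auto using ex_RInt_C0. intros; apply Hle; lra. Qed.

Lemma RInt_of_derive (F f : R -> R) a b : (forall x, is_derive F x (f x)) -> C0 f -> RInt f a b = F b - F a.
Proof.
  intros HF Hf. apply (is_RInt_unique (V:=R_CompleteNormedModule)).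
  apply (is_RInt_derive (V:=R_CompleteNormedModule)); intros; auto.
Qed.

Lemma is_derive_RInt_C0 (f : R -> R) a x : C0 f -> is_derive (fun y => RInt f a y) x (f x).
Proof.
  intros Hf. apply (is_derive_RInt f _ a); [|apply Hf].
  apply filter_forall. intros y. apply (RInt_correct (V:=R_CompleteNormedModule)), ex_RInt_C0, Hf.
Qed.

Lemma RInt_vanishing (f : R -> R) a b : (forall x, Rmin a b < x < Rmax a b -> f x = 0) -> RInt f a b = 0.
Proof. intros Hz. rewrite (RInt_ext f (fun _ => 0)) by auto. rewrite RInt_const_R. R_eq; ring. Qed.

Lemma RInt_vanishes_outside (f : R -> R) a b l h : C0 f -> a <= l -> l <= h -> h <= b ->
  vanishes_outside f l h -> RInt f a b = RInt f l h.
Proof.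
  intros Hf Hal Hlh Hhb Hz.
  rewrite <- (RInt_Chasles_C0 f a l b), <- (RInt_Chasles_C0 f l h b) by exact Hf.
  rewrite (RInt_vanishing f a l), (RInt_vanishing f h b); [R_eq; ring| |].
  - intros x Hx. apply Hz. right. rewrite Rmin_left in Hx by lra. lra.
  - intros x Hx. apply Hz. left. rewrite Rmax_right in Hx by lra. lra.
Qed.

Lemma RInt_pos_on_support (f : R -> R) a b l h : C0 f -> a <= l < h -> h <= b ->
  vanishes_outside f l h -> (forall x, l < x < h -> 0 < f x) -> 0 < RInt f a b.
Proof.
  intros Hf Hl Hh Hz Hpos. rewrite (RInt_vanishes_outside f a b l h) by (auto; lra).
  apply RInt_gt_0; auto; lra.
Qed.

Lemma continuous_eps_delta (g : R -> R) t : continuous g t ->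
  forall eps, 0 < eps -> exists d, 0 < d /\ forall y, Rabs (y - t) < d -> Rabs (g y - g t) < eps.
Proof.
  intros Hc eps Heps.
  destruct (proj2 (continuity_pt_filterlim g t) Hc eps Heps) as [d [Hd Hy]].
  exists d; split; auto. intros y Hyt.
  destruct (Req_dec y t) as [->|Hne]; [rewrite Rminus_diag, Rabs_R0; exact Heps|].
  apply (Hy y). repeat split; auto.
Qed.

Lemma C0_max_on (f : R -> R) lo hi : lo <= hi -> C0 f ->
  exists xM, lo <= xM <= hi /\ forall x, lo <= x <= hi -> f x <= f xM.
Proof.
  intros Hlh Hf.
  destruct (continuity_ab_maj f lo hi Hlh (fun t _ => proj2 (continuity_pt_filterlim f t) (Hf t)))
    as [xM [Hmax HxM]].
  exists xM. split; [exact HxM|exact Hmax].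
Qed.

Lemma RInt_minus_scal2 (f g k : R -> R) a b al be : C0 f -> C0 g -> C0 k ->
  RInt (fun x => f x - a * g x - b * k x) al be
  = RInt f al be - a * RInt g al be - b * RInt k al be.
Proof.
  intros Hf Hg Hk.
  rewrite RInt_minus_C0, RInt_minus_C0, !RInt_scal_C0 by solve_C0. reflexivity.
Qed.

(** * Gauge integrals of continuous functions *)

Lemma delta_fine_le delta lo hi P : delta_fine delta lo hi P -> lo <= hi.
Proof.
  revert lo; induction P as [|[[l t] r] P IH]; intros lo HP; simpl in HP; [lra|].
  destruct HP as [-> [_ [Hlr [_ [_ HP]]]]]. specialize (IH _ HP). lra.
Qed.

Lemma delta_fine_app delta lo mid hi P1 P2 :
  delta_fine delta lo mid P1 -> delta_fine delta mid hi P2 -> delta_fine delta lo hi (P1 ++ P2).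
Proof.
  revert lo; induction P1 as [|[[l t] r] P IH]; intros lo H1 H2; simpl in *; [subst; exact H2|].
  destruct H1 as [-> [Ht [Hlr [H3 [H4 HP]]]]]. repeat split; auto; lra.
Qed.

Lemma delta_fine_mono d1 d2 lo hi P : (forall x, d1 x <= d2 x) ->
  delta_fine d1 lo hi P -> delta_fine d2 lo hi P.
Proof.
  intros Hd. revert lo; induction P as [|[[l t] r] P IH]; intros lo HP; simpl in *; auto.
  destruct HP as [-> [Ht [Hlr [H3 [H4 HP]]]]]. specialize (Hd t).
  repeat split; auto; lra.
Qed.

(* Cousin's lemma; the supremum [s] of the points reachable by a fine partition
   is reached, and is [hi], because one more tag at [s] extends a partition. *)
Lemma delta_fine_exists delta lo hi : (forall x, 0 < delta x) -> lo <= hi ->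
  exists P, delta_fine delta lo hi P.
Proof.
  intros Hd Hlh.
  set (E := fun x => lo <= x <= hi /\ exists P, delta_fine delta lo x P).
  assert (HE : bound E) by (exists hi; intros x [Hx _]; lra).
  assert (Hlo : E lo) by (split; [lra|exists nil; reflexivity]).
  destruct (completeness E HE (ex_intro _ lo Hlo)) as [s [Hub Hlub]].
  assert (Hs : lo <= s <= hi) by (split; [apply Hub, Hlo|apply Hlub; intros x [Hx _]; lra]).
  assert (Hds := Hd s).
  destruct (classic (exists x, E x /\ s - delta s < x)) as [[x [[Hx [P HP]] Hxs]]|Hno].
  2:{ exfalso. assert (Hu : is_upper_bound E (s - delta s)).
      { intros x Ex. apply Rnot_lt_le. intros Hlt. apply Hno. exists x; auto. }
      specialize (Hlub _ Hu). lra. }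
  assert (Hx_s : x <= s) by (apply Hub; split; [lra|exists P; exact HP]).
  set (y := Rmin hi (s + delta s / 2)).
  assert (Hy : s <= y <= s + delta s / 2 /\ y <= hi)
    by (unfold y; repeat split; [apply Rmin_glb; lra|apply Rmin_r|apply Rmin_l]).
  assert (Ey : E y).
  { split; [lra|]. destruct (Req_dec x y) as [<-|Hxy]; [exists P; exact HP|].
    exists (P ++ (x, s, y) :: nil). apply (delta_fine_app _ _ x); [exact HP|].
    simpl. repeat split; lra. }
  assert (Hys : y <= s) by (apply Hub, Ey).
  assert (Hyhi : y = hi).
  { unfold y in *. destruct (Rle_dec hi (s + delta s / 2)).
    - apply Rmin_left; lra.
    - rewrite Rmin_right in Hys; lra. }
  destruct Ey as [_ [Q HQ]]. rewrite Hyhi in HQ. exists Q; exact HQ.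
Qed.

Lemma HK_integral_unique f lo hi I1 I2 : lo <= hi ->
  HK_integral f lo hi I1 -> HK_integral f lo hi I2 -> I1 = I2.
Proof.
  intros Hlh H1 H2.
  apply Rminus_diag_uniq, Rabs_eq_0, Rle_antisym; [|apply Rabs_pos].
  apply le_epsilon. intros eps Heps.
  destruct (H1 (eps / 2) ltac:(lra)) as [d1 [Hd1 Hf1]].
  destruct (H2 (eps / 2) ltac:(lra)) as [d2 [Hd2 Hf2]].
  destruct (delta_fine_exists (fun x => Rmin (d1 x) (d2 x)) lo hi) as [P HP]; auto.
  { intros x; apply Rmin_glb_lt; auto. }
  specialize (Hf1 P (delta_fine_mono _ _ _ _ _ (fun x => Rmin_l _ _) HP)).
  specialize (Hf2 P (delta_fine_mono _ _ _ _ _ (fun x => Rmin_r _ _) HP)).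
  replace (I1 - I2) with (- (riemann_sum f P - I1) + (riemann_sum f P - I2)) by ring.
  eapply Rle_trans; [apply Rabs_triang|]. rewrite Rabs_Ropp. lra.
Qed.

Lemma riemann_sum_ext f g delta lo hi P : (forall x, lo <= x <= hi -> f x = g x) ->
  delta_fine delta lo hi P -> riemann_sum f P = riemann_sum g P.
Proof.
  revert lo; induction P as [|[[l t] r] P IH]; intros lo Hfg HP; simpl in *; auto.
  destruct HP as [-> [Ht [Hlr [H3 [H4 HP]]]]].
  pose proof (delta_fine_le _ _ _ _ HP).
  rewrite (Hfg t) by lra. f_equal. apply (IH r); auto.
  intros x Hx; apply Hfg; lra.
Qed.

Lemma HK_integral_ext f g lo hi I : (forall x, lo <= x <= hi -> f x = g x) ->
  HK_integral g lo hi I -> HK_integral f lo hi I.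
Proof.
  intros Hfg Hg eps Heps. destruct (Hg eps Heps) as [d [Hd Hf]].
  exists d; split; auto. intros P HP. rewrite (riemann_sum_ext f g d lo hi P); auto.
Qed.

(* The gauge is a modulus of continuity of [g] at the tag for [eps / (hi - lo + 1)]:
   then each term of a fine Riemann sum is that close to the integral over its cell. *)
Lemma HK_integral_RInt (g : R -> R) lo hi : C0 g -> lo <= hi ->
  HK_integral g lo hi (RInt g lo hi).
Proof.
  intros Hc Hlh eps Heps.
  set (eta := eps / (hi - lo + 1)).
  assert (Heta : 0 < eta) by (apply Rdiv_lt_0_compat; lra).
  set (d := fun t => epsilon (inhabits 1)
        (fun d => 0 < d /\ forall y, Rabs (y - t) < d -> Rabs (g y - g t) < eta)).
  assert (Hd : forall t, 0 < d t /\ forall y, Rabs (y - t) < d t -> Rabs (g y - g t) < eta).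
  { intros t. apply epsilon_spec, continuous_eps_delta; auto. }
  exists d; split; [intros; apply Hd|].
  assert (Hsum : forall P lo, delta_fine d lo hi P ->
     Rabs (riemann_sum g P - RInt g lo hi) <= eta * (hi - lo)).
  { induction P as [|[[l t] r] P IH]; intros l0 HP; simpl in HP |- *.
    - subst. rewrite RInt_point. simpl. rewrite Rminus_0_r, Rabs_R0. lra.
    - destruct HP as [-> [Ht [Hlr [Hl [Hr HP]]]]].
      specialize (IH r HP). pose proof (delta_fine_le _ _ _ _ HP).
      rewrite <- (RInt_Chasles_C0 g l0 r hi Hc).
      assert (Hcell : Rabs (g t * (r - l0) - RInt g l0 r) <= eta * (r - l0)).
      { rewrite <- RInt_const_R, <- RInt_minus_C0 by solve_C0.
        replace (eta * (r - l0)) with ((r - l0) * eta) by ring.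
        apply abs_RInt_le_const; [lra|apply ex_RInt_C0; solve_C0|].
        intros y Hy. rewrite <- Rabs_Ropp.
        replace (- (g t - g y)) with (g y - g t) by ring.
        left; apply Hd. apply Rabs_def1; lra. }
      replace (g t * (r - l0) + riemann_sum g P - (RInt g l0 r + RInt g r hi))
        with ((g t * (r - l0) - RInt g l0 r) + (riemann_sum g P - RInt g r hi)) by ring.
      eapply Rle_trans; [apply Rabs_triang|]. lra. }
  intros P HP. eapply Rle_lt_trans; [exact (Hsum P lo HP)|].
  unfold eta. apply (Rmult_lt_reg_r (hi - lo + 1)); [lra|].
  replace (eps / (hi - lo + 1) * (hi - lo) * (hi - lo + 1)) with (eps * (hi - lo)) by (field; lra).
  nra.
Qed.

(** * Weak solutions with continuous data *)

Lemma exp_opp_mult c x : exp (- c * x) = / exp (c * x).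
Proof. rewrite <- exp_Ropp. f_equal. ring. Qed.

Ltac field_exp :=
  rewrite ?exp_opp_mult; field; apply Rgt_not_eq, exp_pos.

Lemma derivative_chain_vanishes_outside D l h : derivative_chain D ->
  vanishes_outside (D O) l h -> forall n, vanishes_outside (D n) l h.
Proof.
  intros HD H0 n. induction n as [|n IH]; [exact H0|]. intros x Hx.
  assert (Hzero : is_derive (D n) x 0).
  { apply (is_derive_ext_loc (fun _ => 0)); [|apply (is_derive_const 0)].
    destruct Hx as [Hx|Hx].
    - apply (filter_imp (fun u => u < l)); [|exact (open_lt l x Hx)].
      intros u Hu. symmetry. apply IH. left; exact Hu.
    - apply (filter_imp (fun u => h < u)); [|exact (open_gt h x Hx)].
      intros u Hu. symmetry. apply IH. right; exact Hu. }
  rewrite <- (is_derive_unique _ _ _ (HD n x)). exact (is_derive_unique _ _ _ Hzero).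
Qed.

Lemma derivative_chain_minus_scal2 D1 D2 D3 a b :
  derivative_chain D1 -> derivative_chain D2 -> derivative_chain D3 ->
  derivative_chain (fun n x => D1 n x - a * D2 n x - b * D3 n x).
Proof.
  intros H1 H2 H3 n x.
  apply (is_derive_minus (fun x => D1 n x - a * D2 n x) (fun x => b * D3 n x)).
  - apply (is_derive_minus (D1 n) (fun x => a * D2 n x)); [apply H1|apply is_derive_scal, H2].
  - apply is_derive_scal, H3.
Qed.

(* Riemann-integral form of the weak formulation on [(al, be)]; supports with
   [h < l] would only carry the zero test function. *)
Definition weak_solution_RInt (c : R) (u G : R -> R) (al be : R) : Prop :=
  forall D l h, derivative_chain D -> al < l -> l <= h -> h < be -> vanishes_outside (D O) l h ->
    RInt (fun x => u x * (c * D 1%nat x - D 2%nat x)) al be = RInt (fun x => G x * D O x) al be.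

Section ExplicitSolutions.

Variable c : R.

(* Together with the constants, spans the solutions of [-c u' - u'' = 0]. *)
Definition homogeneous_solution (x : R) : R := RInt (fun s => exp (- c * s)) 0 x.

Lemma is_derive_homogeneous_solution (x : R) : is_derive homogeneous_solution x (exp (- c * x)).
Proof. apply (is_derive_RInt_C0 (fun s => exp (- c * s))), C0_exp_scal. Qed.

Lemma C0_homogeneous_solution : C0 homogeneous_solution.
Proof. exact (C0_of_derive _ _ is_derive_homogeneous_solution). Qed.

Lemma homogeneous_solution_lt x y : x < y -> homogeneous_solution x < homogeneous_solution y.
Proof.
  intros Hxy. apply Rlt_0_minus.
  rewrite <- (RInt_of_derive _ _ x y is_derive_homogeneous_solution) by apply C0_exp_scal.
  apply RInt_gt_0; [exact Hxy|intros; apply exp_pos|intros; apply C0_exp_scal].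
Qed.

Lemma homogeneous_solution_le x y : x <= y -> homogeneous_solution x <= homogeneous_solution y.
Proof. intros [Hxy|Hxy]; [left; apply homogeneous_solution_lt, Hxy|subst; lra]. Qed.

Variables (G : R -> R) (al : R).
Hypothesis HG : C0 G.

Definition weighted_primitive (x : R) : R := RInt (fun t => exp (c * t) * G t) al x.

(* The solution of [-c u' - u'' = G] with [u al = u' al = 0]. *)
Definition particular_solution (x : R) : R :=
  - RInt (fun s => exp (- c * s) * weighted_primitive s) al x.

Lemma is_derive_weighted_primitive (x : R) : is_derive weighted_primitive x (exp (c * x) * G x).
Proof. apply (is_derive_RInt_C0 (fun t => exp (c * t) * G t)). solve_C0. Qed.

Lemma C0_weighted_primitive : C0 weighted_primitive.
Proof. exact (C0_of_derive _ _ is_derive_weighted_primitive). Qed.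

Lemma is_derive_particular_solution (x : R) :
  is_derive particular_solution x (- (exp (- c * x) * weighted_primitive x)).
Proof.
  apply (is_derive_opp (fun y => RInt (fun s => exp (- c * s) * weighted_primitive s) al y)).
  apply (is_derive_RInt_C0 (fun s => exp (- c * s) * weighted_primitive s)).
  pose proof C0_weighted_primitive. solve_C0.
Qed.

Lemma C0_particular_solution : C0 particular_solution.
Proof. exact (C0_of_derive _ _ is_derive_particular_solution). Qed.

Lemma particular_solution_weak be : weak_solution_RInt c particular_solution G al be.
Proof.
  intros D l h HD Hl Hlh Hh H0.
  set (P := particular_solution). set (J := weighted_primitive).
  set (F := fun x => P x * (c * D 0%nat x - D 1%nat x) - exp (- c * x) * J x * D 0%nat x).
  assert (HF : forall x : R, is_derive F x (P x * (c * D 1%nat x - D 2%nat x) - G x * D 0%nat x)).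
  { intros x. assert (E1 := is_derive_particular_solution x).
    assert (E2 := is_derive_weighted_primitive x).
    assert (E3 := HD 0%nat x). assert (E4 := HD 1%nat x).
    fold P in E1. fold J in E1, E2. unfold F.
    auto_derive_hyps. field_exp. }
  assert (Hvan := derivative_chain_vanishes_outside D l h HD H0).
  assert (HPc : C0 P) by apply C0_particular_solution.
  assert (Hint : RInt (fun x => P x * (c * D 1%nat x - D 2%nat x) - G x * D O x) al be = 0).
  { rewrite (RInt_of_derive F _ al be HF) by solve_C0.
    unfold F. rewrite !(Hvan 0%nat), !(Hvan 1%nat) by lra. R_eq; ring. }
  rewrite RInt_minus_C0 in Hint by solve_C0. R_eq; lra.
Qed.

End ExplicitSolutions.

Lemma primitive_vanishes_outside (f : R -> R) al be l h : C0 f -> al < l -> h < be ->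
  vanishes_outside f l h -> RInt f al be = 0 -> vanishes_outside (fun x => RInt f al x) l h.
Proof.
  intros Hf Hl Hh Hvan Htotal x [Hx|Hx].
  - apply RInt_vanishing. intros y Hy. apply Hvan. left.
    assert (Rmax al x < l) by (apply Rmax_lub_lt; lra). lra.
  - rewrite <- (RInt_Chasles_C0 f al be x Hf), Htotal, (RInt_vanishing f be x); [R_eq; ring|].
    intros y Hy. apply Hvan. right.
    assert (h < Rmin be x) by (apply Rmin_glb_lt; lra). lra.
Qed.

Section CompactPreimage.

Variables (c al be l h : R) (Psi : nat -> R -> R).
Hypothesis HPsi : derivative_chain Psi.
Hypotheses (Hl : al < l) (Hh : h < be).
Hypothesis HPsi_van : vanishes_outside (Psi O) l h.
Hypothesis Hmoment0 : RInt (Psi O) al be = 0.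
Hypothesis Hmoment1 : RInt (fun x => homogeneous_solution c x * Psi O x) al be = 0.

Let q (x : R) : R := RInt (Psi O) al x.
Let Q (x : R) : R := RInt (fun t => exp (- c * t) * q t) al x.

(* [phi := preimage_chain 0 = - exp (c x) Q x] solves [c phi' - phi'' = Psi 0];
   its derivatives follow from [phi' = c phi - q] and [q' = Psi 0]. *)
Let q_chain (n : nat) : R -> R := match n with O => q | S n => Psi n end.
Fixpoint preimage_chain (n : nat) : R -> R :=
  match n with
  | O => fun x => - exp (c * x) * Q x
  | S n => fun x => c * preimage_chain n x - q_chain n x
  end.

Lemma is_derive_q (x : R) : is_derive q x (Psi O x).
Proof. apply (is_derive_RInt_C0 (Psi O)). solve_C0. Qed.

Lemma C0_q : C0 q.
Proof. exact (C0_of_derive _ _ is_derive_q). Qed.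

Lemma is_derive_Q (x : R) : is_derive Q x (exp (- c * x) * q x).
Proof. apply (is_derive_RInt_C0 (fun t => exp (- c * t) * q t)). pose proof C0_q. solve_C0. Qed.

Lemma derivative_chain_preimage : derivative_chain preimage_chain.
Proof.
  intros n. induction n as [|n IH]; intros x.
  - assert (E := is_derive_Q x). simpl. auto_derive_hyps. field_exp.
  - apply (is_derive_minus (fun x => c * preimage_chain n x) (q_chain n));
      [apply is_derive_scal, IH|].
    destruct n; [apply is_derive_q|apply HPsi].
Qed.

Lemma q_vanishes_outside : vanishes_outside q l h.
Proof. apply (primitive_vanishes_outside _ al be); auto. solve_C0. Qed.

(* Integration by parts against [homogeneous_solution] turns the first moment
   of [Psi 0] into the total integral of [exp (-c t) q t]. *)
Lemma Q_total : RInt (fun t => exp (- c * t) * q t) al be = 0.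
Proof.
  set (k := homogeneous_solution c).
  assert (Hd : forall x : R, is_derive (fun x => k x * q x) x
                 (exp (- c * x) * q x + k x * Psi O x)).
  { intros x. assert (E1 := is_derive_homogeneous_solution c x).
    assert (E2 := is_derive_q x). fold k in E1. auto_derive_hyps. ring. }
  assert (Hk : C0 k) by apply C0_homogeneous_solution.
  assert (Hq : C0 q) by apply C0_q.
  assert (Hparts := RInt_of_derive _ _ al be Hd ltac:(solve_C0)).
  rewrite RInt_plus_C0 in Hparts by solve_C0.
  assert (Hq_al : q al = 0) by exact (RInt_point (V:=R_CompleteNormedModule) al (Psi O)).
  unfold k in Hparts. rewrite Hmoment1, Hq_al, (q_vanishes_outside be (or_intror Hh)) in Hparts.
  R_eq. lra.
Qed.

Lemma compact_preimage : exists Phi, derivative_chain Phi /\ vanishes_outside (Phi O) l h /\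
  forall x, c * Phi 1%nat x - Phi 2%nat x = Psi O x.
Proof.
  exists preimage_chain. split; [exact derivative_chain_preimage|split].
  - intros x Hx. simpl. fold (Q x).
    rewrite (primitive_vanishes_outside (fun t => exp (- c * t) * q t) al be l h); auto.
    + ring.
    + pose proof C0_q. solve_C0.
    + intros y Hy. rewrite q_vanishes_outside by exact Hy. ring.
    + exact Q_total.
  - intros x. simpl. ring.
Qed.

End CompactPreimage.

Lemma linear_system_2x2 p q r s u v : p * s - q * r <> 0 ->
  exists x y, x * p + y * q = u /\ x * r + y * s = v.
Proof.
  intros Hdet. exists ((u * s - v * q) / (p * s - q * r)), ((v * p - u * r) / (p * s - q * r)).
  split; field; exact Hdet.
Qed.

Lemma C0_zero_on_closure (g : R -> R) al be : C0 g -> al < be ->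
  (forall x, al < x < be -> g x = 0) -> forall x, al <= x <= be -> g x = 0.
Proof.
  intros Hg Hab Hin x Hx. destruct (Req_dec (g x) 0) as [|Hne]; [assumption|exfalso].
  destruct (continuous_eps_delta g x (Hg x) (Rabs (g x)) (Rabs_pos_lt _ Hne)) as [d [Hd Hclose]].
  set (s := Rmin d ((be - al) / 2) / 2).
  assert (Hs : 0 < s /\ s < d /\ s <= (be - al) / 4).
  { pose proof (Rmin_l d ((be - al) / 2)). pose proof (Rmin_r d ((be - al) / 2)).
    assert (0 < Rmin d ((be - al) / 2)) by (apply Rmin_glb_lt; lra). unfold s; lra. }
  set (y := if Rle_dec x ((al + be) / 2) then x + s else x - s).
  assert (Hy : al < y < be /\ Rabs (y - x) < d).
  { unfold y; destruct Rle_dec; split; try split; try lra; apply Rabs_def1; lra. }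
  specialize (Hclose y (proj2 Hy)). rewrite (Hin y (proj1 Hy)), Rminus_0_l, Rabs_Ropp in Hclose. lra.
Qed.

(* If [g x0 <> 0], a bump small enough that [g] keeps the sign of [g x0] on its
   support has [g x0 * g * bump > 0] there. *)
Lemma C0_orthogonal_bumps_zero (g : R -> R) al be : al < be -> C0 g ->
  (forall x0 e, 0 < e -> al < x0 - e -> x0 + e < be ->
     RInt (fun x => g x * bump x0 e x) al be = 0) ->
  forall x, al <= x <= be -> g x = 0.
Proof.
  intros Hab Hg Horth. apply C0_zero_on_closure; auto.
  intros x0 Hx0. destruct (Req_dec (g x0) 0) as [|Hne]; [assumption|exfalso].
  assert (Hhalf : 0 < Rabs (g x0) / 2) by (apply Rabs_pos_lt in Hne; lra).
  destruct (continuous_eps_delta g x0 (Hg x0) _ Hhalf) as [d [Hd Hclose]].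
  set (e := Rmin d (Rmin (x0 - al) (be - x0)) / 2).
  assert (He : 0 < e /\ e < d /\ e < x0 - al /\ e < be - x0).
  { pose proof (Rmin_l d (Rmin (x0 - al) (be - x0))). pose proof (Rmin_r d (Rmin (x0 - al) (be - x0))).
    pose proof (Rmin_l (x0 - al) (be - x0)). pose proof (Rmin_r (x0 - al) (be - x0)).
    assert (0 < Rmin d (Rmin (x0 - al) (be - x0))) by (repeat apply Rmin_glb_lt; lra).
    unfold e; lra. }
  assert (Hpos : 0 < RInt (fun x => g x0 * (g x * bump x0 e x)) al be).
  { apply (RInt_pos_on_support _ al be (x0 - e) (x0 + e)); [solve_C0|lra|lra| |].
    - intros x Hx. rewrite (bump_vanishes_outside x0 e (proj1 He) x Hx). ring.
    - intros x Hx. assert (Hbx := bump_pos x0 e x (proj1 He) Hx).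
      assert (Hgx : Rabs (g x - g x0) < Rabs (g x0) / 2) by (apply Hclose, Rabs_def1; lra).
      rewrite <- Rmult_assoc. apply Rmult_lt_0_compat; [|exact Hbx].
      destruct (Rdichotomy _ _ Hne).
      + rewrite (Rabs_left (g x0)) in Hgx by lra. apply Rabs_def2 in Hgx.
        assert (g x < 0) by lra. nra.
      + rewrite (Rabs_right (g x0)) in Hgx by lra. apply Rabs_def2 in Hgx.
        assert (0 < g x) by lra. nra. }
  rewrite RInt_scal_C0, (Horth x0 e) in Hpos by (solve_C0 || lra). lra.
Qed.

Lemma bump_moment1_le c x0 e al be : 0 < e -> al <= be ->
  RInt (fun x => homogeneous_solution c x * bump x0 e x) al be
  <= homogeneous_solution c (x0 + e) * RInt (bump x0 e) al be.
Proof.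
  intros He Hab. pose proof (C0_homogeneous_solution c).
  rewrite <- RInt_scal_C0 by solve_C0. apply RInt_le_C0; [exact Hab|solve_C0|solve_C0|].
  intros x _. destruct (Rle_dec x (x0 + e)).
  - apply Rmult_le_compat_r; [apply bump_ge0|apply homogeneous_solution_le; lra].
  - rewrite (bump_vanishes_outside x0 e He x) by lra. lra.
Qed.

Lemma bump_moment1_ge c x0 e al be : 0 < e -> al <= be ->
  homogeneous_solution c (x0 - e) * RInt (bump x0 e) al be
  <= RInt (fun x => homogeneous_solution c x * bump x0 e x) al be.
Proof.
  intros He Hab. pose proof (C0_homogeneous_solution c).
  rewrite <- RInt_scal_C0 by solve_C0. apply RInt_le_C0; [exact Hab|solve_C0|solve_C0|].
  intros x _. destruct (Rle_dec (x0 - e) x).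
  - apply Rmult_le_compat_r; [apply bump_ge0|apply homogeneous_solution_le; lra].
  - rewrite (bump_vanishes_outside x0 e He x) by lra. lra.
Qed.

Section WeakHomogeneous.

Variables (c al be : R) (V : R -> R).
Hypothesis Hab : al < be.
Hypothesis HV : C0 V.
Hypothesis Hweak : forall D l h, derivative_chain D -> al < l -> l <= h -> h < be ->
  vanishes_outside (D O) l h -> RInt (fun x => V x * (c * D 1%nat x - D 2%nat x)) al be = 0.

Let k := homogeneous_solution c.

Lemma zero_moments_orthogonal Psi l h : derivative_chain Psi -> al < l -> l <= h -> h < be ->
  vanishes_outside (Psi O) l h ->
  RInt (Psi O) al be = 0 -> RInt (fun x => k x * Psi O x) al be = 0 ->
  RInt (fun x => V x * Psi O x) al be = 0.
Proof.
  intros HPsi Hl Hlh Hh Hvan Hm0 Hm1.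
  destruct (compact_preimage c al be l h Psi HPsi Hl Hh Hvan Hm0 Hm1) as [Phi [HPhi [Hvan' Hpre]]].
  rewrite <- (Hweak Phi l h) by assumption. apply RInt_ext. intros x _. rewrite Hpre. reflexivity.
Qed.

(* Two bumps with disjoint supports, used to adjust the two moments of a test function. *)
Let e := (be - al) / 8.
Let b1 := bump (al + 2 * e) e.
Let b2 := bump (al + 6 * e) e.
Let m1 := RInt b1 al be.
Let m2 := RInt b2 al be.
Let n1 := RInt (fun x => k x * b1 x) al be.
Let n2 := RInt (fun x => k x * b2 x) al be.

Lemma bump_moments_det_pos : 0 < m1 * n2 - m2 * n1.
Proof.
  assert (He : 0 < e) by (unfold e; lra).
  assert (Hm : forall p, al + e <= p <= al + 7 * e -> 0 < RInt (bump p e) al be).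
  { intros p Hp. apply (RInt_pos_on_support _ al be (p - e) (p + e)); [solve_C0|unfold e in *; lra..| |].
    - apply bump_vanishes_outside, He.
    - intros x Hx. apply bump_pos; assumption. }
  assert (Hm1 : 0 < m1) by (apply Hm; lra). assert (Hm2 : 0 < m2) by (apply Hm; lra).
  assert (Hn1 := bump_moment1_le c (al + 2 * e) e al be He ltac:(lra)).
  assert (Hn2 := bump_moment1_ge c (al + 6 * e) e al be He ltac:(lra)).
  assert (Hk := homogeneous_solution_lt c (al + 2 * e + e) (al + 6 * e - e) ltac:(lra)).
  fold k b1 b2 m1 m2 n1 n2 in Hn1, Hn2, Hk.
  assert (m1 * m2 * (k (al + 6 * e - e) - k (al + 2 * e + e)) > 0)
    by (apply Rmult_lt_0_compat; [apply Rmult_lt_0_compat|]; lra).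
  nra.
Qed.

Lemma bump_corrected_orthogonal Psi l h : derivative_chain Psi -> al < l -> l <= h -> h < be ->
  vanishes_outside (Psi O) l h -> exists a b,
    let chi x := Psi O x - a * b1 x - b * b2 x in
    RInt chi al be = 0 /\ RInt (fun x => k x * chi x) al be = 0 /\
    RInt (fun x => V x * chi x) al be = 0.
Proof.
  intros HPsi Hl Hlh Hh Hvan.
  assert (He : 0 < e) by (unfold e; lra).
  assert (Hk : C0 k) by apply C0_homogeneous_solution.
  assert (HPsi0 : C0 (Psi O)) by solve_C0.
  assert (Hb1 : C0 b1) by apply C0_bump. assert (Hb2 : C0 b2) by apply C0_bump.
  assert (Hdet : m1 * n2 - m2 * n1 <> 0) by (pose proof bump_moments_det_pos; lra).
  destruct (linear_system_2x2 m1 m2 n1 n2 (RInt (Psi O) al be)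
              (RInt (fun x => k x * Psi O x) al be) Hdet) as [a [b [Ha Hb]]].
  exists a, b. intros chi.
  assert (Hchi0 : RInt chi al be = 0).
  { unfold chi. rewrite RInt_minus_scal2 by solve_C0. fold m1 m2. R_eq. lra. }
  assert (Hchi1 : RInt (fun x => k x * chi x) al be = 0).
  { unfold chi. rewrite (RInt_ext _ (fun x => k x * Psi O x - a * (k x * b1 x) - b * (k x * b2 x)))
      by (intros; R_eq; ring).
    rewrite RInt_minus_scal2 by solve_C0. fold n1 n2. R_eq. lra. }
  split; [exact Hchi0|split; [exact Hchi1|]].
  pose proof (Rmin_l l (al + e)). pose proof (Rmin_r l (al + e)).
  pose proof (Rmax_l h (al + 7 * e)). pose proof (Rmax_r h (al + 7 * e)).
  apply (zero_moments_orthogonal (fun n x => Psi n x - a * Derive_n b1 n x - b * Derive_n b2 n x)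
           (Rmin l (al + e)) (Rmax h (al + 7 * e))).
  - apply derivative_chain_minus_scal2; [exact HPsi|apply smooth_derivative_chain, smooth_bump..].
  - apply Rmin_glb_lt; unfold e; lra.
  - lra.
  - apply Rmax_lub_lt; unfold e; lra.
  - intros x Hx. change (Psi O x - a * b1 x - b * b2 x = 0). unfold b1, b2.
    rewrite Hvan, !bump_vanishes_outside by (exact He || lra). ring.
  - exact Hchi0.
  - exact Hchi1.
Qed.

Lemma affine_correction_orthogonal A B :
  RInt (fun x => (V x - A - B * k x) * b1 x) al be = 0 ->
  RInt (fun x => (V x - A - B * k x) * b2 x) al be = 0 ->
  forall Psi l h, derivative_chain Psi -> al < l -> l <= h -> h < be -> vanishes_outside (Psi O) l h ->
    RInt (fun x => (V x - A - B * k x) * Psi O x) al be = 0.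
Proof.
  intros HW1 HW2 Psi l h HPsi Hl Hlh Hh Hvan.
  destruct (bump_corrected_orthogonal Psi l h HPsi Hl Hlh Hh Hvan) as [a [b [Hchi0 [Hchi1 HVchi]]]].
  assert (Hk : C0 k) by apply C0_homogeneous_solution.
  assert (HPsi0 : C0 (Psi O)) by solve_C0.
  assert (Hb1 : C0 b1) by apply C0_bump. assert (Hb2 : C0 b2) by apply C0_bump.
  set (W := fun x => V x - A - B * k x). assert (HW : C0 W) by (unfold W; solve_C0).
  set (chi := fun x => Psi O x - a * b1 x - b * b2 x). assert (Hchi : C0 chi) by (unfold chi; solve_C0).
  assert (E1 : RInt (fun x => W x * chi x) al be
               = RInt (fun x => W x * Psi O x) al be - a * RInt (fun x => W x * b1 x) al be
                 - b * RInt (fun x => W x * b2 x) al be).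
  { rewrite <- RInt_minus_scal2 by solve_C0. apply RInt_ext. intros x _. unfold chi. R_eq; ring. }
  assert (E2 : RInt (fun x => W x * chi x) al be = 0).
  { rewrite (RInt_ext _ (fun x => V x * chi x - A * chi x - B * (k x * chi x)))
      by (intros; unfold W; R_eq; ring).
    rewrite RInt_minus_scal2 by solve_C0. unfold chi. rewrite HVchi, Hchi0, Hchi1. R_eq; ring. }
  unfold W in E1, E2 |- *. rewrite HW1, HW2 in E1. R_eq. lra.
Qed.

Lemma weak_homogeneous_affine : exists A B, forall x, al <= x <= be -> V x = A + B * k x.
Proof.
  assert (Hdet : m1 * n2 - n1 * m2 <> 0) by (pose proof bump_moments_det_pos; lra).
  destruct (linear_system_2x2 m1 n1 m2 n2 (RInt (fun x => V x * b1 x) al be)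
              (RInt (fun x => V x * b2 x) al be) Hdet) as [A [B [H1 H2]]].
  exists A, B.
  assert (Hk : C0 k) by apply C0_homogeneous_solution.
  assert (Hb1 : C0 b1) by apply C0_bump. assert (Hb2 : C0 b2) by apply C0_bump.
  assert (Hcorr : forall b, C0 b -> RInt (fun x => (V x - A - B * k x) * b x) al be
                  = RInt (fun x => V x * b x) al be - A * RInt b al be
                    - B * RInt (fun x => k x * b x) al be).
  { intros b Hb. rewrite <- RInt_minus_scal2 by solve_C0. apply RInt_ext. intros; R_eq; ring. }
  assert (Horth := affine_correction_orthogonal A B).
  rewrite !Hcorr in Horth by assumption. fold m1 m2 n1 n2 in Horth.
  specialize (Horth ltac:(R_eq; lra) ltac:(R_eq; lra)).
  intros x Hx. enough (Hzero : V x - A - B * k x = 0) by lra.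
  apply (C0_orthogonal_bumps_zero (fun x => V x - A - B * k x) al be); [exact Hab|solve_C0| |exact Hx].
  intros x0 e0 He0 Hl Hh.
  exact (Horth (Derive_n (bump x0 e0)) (x0 - e0) (x0 + e0)
           (smooth_derivative_chain _ (smooth_bump x0 e0)) Hl ltac:(lra) Hh
           (bump_vanishes_outside x0 e0 He0)).
Qed.

End WeakHomogeneous.

Lemma weak_solution_representation c al be (U G : R -> R) : al < be -> C0 U -> C0 G ->
  weak_solution_RInt c U G al be ->
  exists A B, forall x, al <= x <= be ->
    U x = A + B * homogeneous_solution c x + particular_solution c G al x.
Proof.
  intros Hab HU HG Hweak.
  set (P := particular_solution c G al).
  assert (HP : C0 P) by apply C0_particular_solution, HG.
  destruct (weak_homogeneous_affine c al be (fun x => U x - P x) Hab ltac:(solve_C0))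
    as [A [B HAB]].
  - intros D l h HD Hl Hlh Hh Hvan.
    rewrite (RInt_ext _ (fun x => U x * (c * D 1%nat x - D 2%nat x) - P x * (c * D 1%nat x - D 2%nat x)))
      by (intros; R_eq; ring).
    rewrite RInt_minus_C0 by solve_C0.
    unfold P. rewrite (Hweak D l h), (particular_solution_weak c G al HG be D l h) by assumption.
    R_eq; ring.
  - exists A, B. intros x Hx. specialize (HAB x Hx). lra.
Qed.

(** * Propagation of positivity *)

Lemma exp_mult_le_on_interval s lo hi t : lo <= t <= hi ->
  exp (s * t) <= exp (Rabs s * (Rabs lo + Rabs hi)).
Proof.
  intros Ht. apply Rnot_lt_le. intros Hlt. apply exp_lt_inv in Hlt.
  assert (Hbound : Rabs t <= Rabs lo + Rabs hi) by (unfold Rabs; repeat destruct Rcase_abs; lra).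
  assert (s * t <= Rabs s * (Rabs lo + Rabs hi)); [|lra].
  apply Rle_trans with (Rabs (s * t)); [apply RRle_abs|].
  rewrite Rabs_mult. apply Rmult_le_compat_l; [apply Rabs_pos|exact Hbound].
Qed.

Section PositivityPropagation.

Variables (c lo hi A B K : R) (U G : R -> R).
Hypotheses (HU : C0 U) (HG : C0 G) (HK : 0 <= K).
Hypothesis Hrep : forall x, lo <= x <= hi ->
  U x = A + B * homogeneous_solution c x + particular_solution c G lo x.
Hypothesis Hnonneg : forall x, lo <= x <= hi -> 0 <= U x.
Hypothesis HG_lower : forall x, lo <= x <= hi -> - K * U x <= G x.

Let J := weighted_primitive c G lo.
Let Urep (x : R) : R := A + B * homogeneous_solution c x + particular_solution c G lo x.

Lemma is_derive_Urep (x : R) : is_derive Urep x (exp (- c * x) * (B - J x)).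
Proof.
  assert (E1 := is_derive_homogeneous_solution c x).
  assert (E2 := is_derive_particular_solution c G lo HG x).
  unfold Urep. auto_derive_hyps. fold J. ring.
Qed.

Lemma C0_J : C0 J.
Proof. apply C0_weighted_primitive, HG. Qed.

(* An interior zero of [U >= 0] is a minimum, so [U'] vanishes there. *)
Lemma interior_zero_slope x1 : lo < x1 < hi -> U x1 = 0 -> B = J x1.
Proof.
  intros Hx1 HUx1.
  assert (Hd := is_derive_Urep x1). apply is_derive_Reals in Hd.
  assert (Hslope : derive_pt Urep x1 (exist _ _ Hd) = 0).
  { apply (deriv_minimum Urep lo hi x1); [lra|lra|].
    intros x Hlo Hhi. unfold Urep. rewrite <- !Hrep by lra. rewrite HUx1. apply Hnonneg; lra. }
  simpl in Hslope. apply Rmult_integral in Hslope as [Hexp|Hzero].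
  - pose proof (exp_pos (- c * x1)). lra.
  - lra.
Qed.

Lemma interior_zero_formula x1 y : lo < x1 < hi -> U x1 = 0 -> lo <= y <= x1 ->
  U y = RInt (fun s => exp (- c * s) * (J s - J x1)) y x1.
Proof.
  intros Hx1 HUx1 Hy. pose proof C0_J.
  assert (HB := interior_zero_slope x1 Hx1 HUx1).
  assert (Hint := RInt_of_derive Urep _ y x1 is_derive_Urep ltac:(solve_C0)).
  unfold Urep in Hint. rewrite <- !Hrep, HUx1 in Hint by lra.
  rewrite (RInt_ext _ (fun s => -1 * (exp (- c * s) * (B - J s))))
    by (intros; rewrite HB; R_eq; ring).
  rewrite RInt_scal_C0, Hint by solve_C0. R_eq; ring.
Qed.

Let E := exp (Rabs c * (Rabs lo + Rabs hi)).

Lemma E_ge1 : 1 <= E.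
Proof.
  unfold E. rewrite <- exp_0. apply Rnot_lt_le. intros Hlt. apply exp_lt_inv in Hlt.
  pose proof (Rabs_pos c). pose proof (Rabs_pos lo). pose proof (Rabs_pos hi). nra.
Qed.

Lemma J_increment_lower_bound s x1 M : lo <= s <= x1 -> x1 <= hi -> 0 <= M ->
  (forall t, s <= t <= x1 -> U t <= M) -> - (E * K * M) * (x1 - s) <= J x1 - J s.
Proof.
  intros Hs Hx1 HM HUM.
  assert (HJ : J x1 - J s = RInt (fun t => exp (c * t) * G t) s x1).
  { unfold J, weighted_primitive. rewrite <- (RInt_Chasles_C0 _ lo s x1) by solve_C0. R_eq; ring. }
  rewrite HJ, <- (RInt_const_R (- (E * K * M))).
  apply RInt_le_C0; [lra|solve_C0|solve_C0|].
  intros t Ht. assert (HUt := HUM t Ht). assert (HGt := HG_lower t ltac:(lra)).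
  assert (HEt := exp_mult_le_on_interval c lo hi t ltac:(lra)). fold E in HEt.
  assert (Hexp := exp_pos (c * t)).
  assert (HKU : K * U t <= K * M) by (apply Rmult_le_compat_l; assumption).
  assert (HKM : 0 <= K * M) by (apply Rmult_le_pos; assumption).
  assert (exp (c * t) * (K * M) <= E * (K * M)) by (apply Rmult_le_compat_r; lra).
  nra.
Qed.

(* The length of the interval to the left of a zero on which [U] is forced to vanish. *)
Let step := Rmin 1 (/ (2 * (E * E * K) + 1)).

Lemma step_pos : 0 < step.
Proof.
  pose proof E_ge1. assert (0 <= E * E * K) by (apply Rmult_le_pos; nra).
  apply Rmin_glb_lt; [lra|apply Rinv_0_lt_compat; lra].
Qed.

Lemma step_small : step * step * (E * E * K) <= / 2.
Proof.
  pose proof E_ge1. set (q := E * E * K).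
  assert (Hq : 0 <= q) by (apply Rmult_le_pos; nra).
  assert (H1 : step <= 1) by apply Rmin_l.
  assert (H2 : step * (2 * q + 1) <= 1).
  { replace 1 with (/ (2 * q + 1) * (2 * q + 1)) at 2 by (field; lra).
    apply Rmult_le_compat_r; [lra|apply Rmin_r]. }
  pose proof step_pos. nra.
Qed.

(* With [M] the maximum of [U] left of the zero [x1], the formula for [U] gives
   [U <= step^2 E^2 K M <= M / 2], hence [M = 0]. *)
Lemma interior_zero_spreads_left x1 : lo < x1 < hi -> U x1 = 0 ->
  forall y, Rmax lo (x1 - step) <= y <= x1 -> U y = 0.
Proof.
  intros Hx1 HUx1.
  set (x' := Rmax lo (x1 - step)).
  assert (Hx' : lo <= x' /\ x1 - step <= x' /\ x' <= x1).
  { pose proof step_pos. split; [apply Rmax_l|split; [apply Rmax_r|apply Rmax_lub; lra]]. }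
  destruct (C0_max_on U x' x1 ltac:(lra) HU) as [xM [HxM HUxM]].
  set (M := U xM). assert (HM : 0 <= M) by (apply Hnonneg; lra).
  pose proof E_ge1. pose proof step_pos. pose proof C0_J.
  assert (HEKM : 0 <= E * K * M) by (apply Rmult_le_pos; [apply Rmult_le_pos|]; lra).
  assert (Hbound : forall y, x' <= y <= x1 -> U y <= step * step * (E * E * K) * M).
  { intros y Hy. rewrite (interior_zero_formula x1 y Hx1 HUx1) by lra.
    apply Rle_trans with (RInt (fun _ => E * (E * K * M * step)) y x1).
    - apply RInt_le_C0; [lra|solve_C0|solve_C0|]. intros s Hs.
      assert (HJ := J_increment_lower_bound s x1 M ltac:(lra) ltac:(lra) HM
                      (fun t Ht => HUxM t ltac:(lra))).
      assert (HEs := exp_mult_le_on_interval (- c) lo hi s ltac:(lra)).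
      rewrite Rabs_Ropp in HEs. fold E in HEs.
      assert (Hexp := exp_pos (- c * s)).
      assert (HJs : J s - J x1 <= E * K * M * step) by nra.
      apply Rle_trans with (exp (- c * s) * (E * K * M * step)).
      + apply Rmult_le_compat_l; lra.
      + apply Rmult_le_compat_r; [apply Rmult_le_pos; lra|exact HEs].
    - rewrite RInt_const_R.
      replace (step * step * (E * E * K) * M) with (E * (E * K * M * step) * step) by ring.
      apply Rmult_le_compat_l; [|lra].
      apply Rmult_le_pos; [lra|apply Rmult_le_pos; lra]. }
  assert (HMhalf : M <= M / 2).
  { apply Rle_trans with (step * step * (E * E * K) * M); [exact (Hbound xM HxM)|].
    pose proof step_small. nra. }
  intros y Hy. assert (U y <= M) by (apply HUxM; lra). assert (0 <= U y) by (apply Hnonneg; lra).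
  lra.
Qed.

Theorem positivity_propagation : 0 < U lo -> forall x, lo < x < hi -> 0 < U x.
Proof.
  intros HUlo x1 Hx1.
  destruct (Hnonneg x1 ltac:(lra)) as [|HUx1]; [assumption|exfalso]. symmetry in HUx1.
  assert (Hzero : forall n y, Rmax lo (x1 - INR n * step) <= y <= x1 -> U y = 0).
  { induction n as [|n IH]; intros y Hy.
    - rewrite Rmult_0_l, Rminus_0_r in Hy. pose proof (Rmax_r lo x1).
      replace y with x1 by lra. exact HUx1.
    - assert (Hnstep : 0 <= INR n * step)
        by (apply Rmult_le_pos; [apply pos_INR|left; apply step_pos]).
      pose proof (Rmax_l lo (x1 - INR (S n) * step)). pose proof (Rmax_r lo (x1 - INR (S n) * step)).
      rewrite S_INR in *.
      destruct (Rle_lt_dec (x1 - INR n * step) y) as [Hzy|Hyz].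
      + apply IH. split; [apply Rmax_lub|]; lra.
      + apply (interior_zero_spreads_left (x1 - INR n * step)); [lra| |].
        * apply IH. split; [apply Rmax_lub|]; lra.
        * split; [apply Rmax_lub|]; lra. }
  destruct (INR_archimed step (x1 - lo) step_pos) as [n Hn].
  assert (U lo = 0) by (apply (Hzero n); split; [rewrite Rmax_left|]; lra).
  lra.
Qed.

End PositivityPropagation.

(** * Sign of weak solutions *)

Definition clamp (lo hi x : R) : R := Rmax lo (Rmin hi x).

Lemma clamp_in lo hi x : lo <= hi -> lo <= clamp lo hi x <= hi.
Proof. intros Hlh. unfold clamp, Rmax, Rmin. repeat destruct Rle_dec; lra. Qed.

Lemma clamp_id lo hi x : lo <= x <= hi -> clamp lo hi x = x.
Proof. intros Hx. unfold clamp, Rmax, Rmin. repeat destruct Rle_dec; lra. Qed.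

Lemma clamp_lipschitz lo hi x y : lo <= hi -> Rabs (clamp lo hi y - clamp lo hi x) <= Rabs (y - x).
Proof.
  intros Hlh. unfold clamp, Rmax, Rmin.
  repeat destruct Rle_dec; unfold Rabs; repeat destruct Rcase_abs; lra.
Qed.

Lemma C0_clamp (f : R -> R) lo hi : lo <= hi -> continuous_on_closed f lo hi ->
  C0 (fun x => f (clamp lo hi x)).
Proof.
  intros Hlh Hf x. apply continuity_pt_filterlim.
  intros eps Heps. destruct (Hf (clamp lo hi x) (clamp_in lo hi x Hlh) eps Heps) as [d [Hd Hclose]].
  exists d; split; [exact Hd|]. intros y [_ Hy]. simpl in *. unfold R_dist in *.
  apply Hclose; [apply clamp_in, Hlh|].
  eapply Rle_lt_trans; [apply clamp_lipschitz, Hlh|exact Hy].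
Qed.

Lemma test_function_of_chain D lo hi l h : derivative_chain D -> lo < l -> h < hi ->
  vanishes_outside (D O) l h -> test_function lo hi D.
Proof.
  intros HD Hl Hh Hvan. split; [intros n x; apply is_derive_Reals, HD|].
  exists l, h. split; [exact Hl|split; [exact Hh|exact Hvan]].
Qed.

(* On [lo, hi] the gauge integrals of the weak formulation are Riemann integrals of
   continuous functions, which may be restricted to any [(al, be)] containing the support. *)
Lemma weak_solution_restrict c (u F ut G : R -> R) lo hi al be :
  lo <= al -> be <= hi -> weak_solution c u F lo hi -> C0 ut -> C0 G ->
  (forall x, lo <= x <= hi -> u x = ut x) -> (forall x, al < x < be -> F x = G x) ->
  weak_solution_RInt c ut G al be.
Proof.
  intros Hal Hbe Hweak Hut HG Hu HF D l h HD Hl Hlh Hh Hvan.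
  assert (Hvan' := derivative_chain_vanishes_outside D l h HD Hvan).
  destruct (Hweak D (test_function_of_chain D lo hi l h HD ltac:(lra) ltac:(lra) Hvan))
    as [I [HI1 HI2]].
  set (g1 := fun x => ut x * (c * D 1%nat x - D 2%nat x)).
  set (g2 := fun x => G x * D O x).
  assert (Hg1 : C0 g1) by (unfold g1; solve_C0).
  assert (Hg2 : C0 g2) by (unfold g2; solve_C0).
  assert (Hvan1 : vanishes_outside g1 l h)
    by (intros x Hx; unfold g1; rewrite (Hvan' 1%nat x Hx), (Hvan' 2%nat x Hx); ring).
  assert (Hvan2 : vanishes_outside g2 l h)
    by (intros x Hx; unfold g2; rewrite (Hvan' 0%nat x Hx); ring).
  assert (E1 : I = RInt g1 lo hi).
  { apply (HK_integral_unique _ lo hi _ _ ltac:(lra) HI1).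
    apply (HK_integral_ext _ g1); [intros x Hx; unfold g1; rewrite Hu by exact Hx; reflexivity|].
    apply HK_integral_RInt; [exact Hg1|lra]. }
  assert (E2 : I = RInt g2 lo hi).
  { apply (HK_integral_unique _ lo hi _ _ ltac:(lra) HI2).
    apply (HK_integral_ext _ g2); [|apply HK_integral_RInt; [exact Hg2|lra]].
    intros x Hx. unfold g2. destruct (Rlt_dec x l) as [Hxl|Hxl].
    - rewrite (Hvan' 0%nat x (or_introl Hxl)). ring.
    - destruct (Rlt_dec h x) as [Hxh|Hxh].
      + rewrite (Hvan' 0%nat x (or_intror Hxh)). ring.
      + rewrite HF by lra. reflexivity. }
  change (RInt g1 al be = RInt g2 al be).
  rewrite (RInt_vanishes_outside g1 al be l h), (RInt_vanishes_outside g2 al be l h)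
    by (assumption || lra).
  rewrite <- (RInt_vanishes_outside g1 lo hi l h), <- (RInt_vanishes_outside g2 lo hi l h)
    by (assumption || lra).
  rewrite <- E1, <- E2. reflexivity.
Qed.

(* [al] is the supremum of the points of [[lo, x0]] where [f >= 0]. *)
Lemma last_zero_before (f : R -> R) lo x0 : C0 f -> lo < x0 -> 0 <= f lo -> f x0 < 0 ->
  exists al, lo <= al < x0 /\ f al = 0 /\ forall y, al < y <= x0 -> f y < 0.
Proof.
  intros Hf Hlo Hflo Hfx0.
  set (E := fun y => lo <= y <= x0 /\ 0 <= f y).
  assert (HE : bound E) by (exists x0; intros y [Hy _]; lra).
  destruct (completeness E HE (ex_intro _ lo (conj (conj (Rle_refl lo) (Rlt_le _ _ Hlo)) Hflo)))
    as [al [Hub Hlub]].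
  assert (Hal : lo <= al <= x0)
    by (split; [apply Hub; split; [lra|exact Hflo]|apply Hlub; intros y [Hy _]; lra]).
  assert (Hneg : forall y, al < y <= x0 -> f y < 0).
  { intros y Hy. apply Rnot_le_lt. intros Hfy.
    assert (y <= al) by (apply Hub; split; [lra|exact Hfy]). lra. }
  assert (Hge : 0 <= f al).
  { apply Rnot_lt_le. intros Hfal.
    destruct (continuous_eps_delta f al (Hf al) (- f al) ltac:(lra)) as [d [Hd Hclose]].
    assert (Hu : is_upper_bound E (al - d)).
    { intros y [Hy Hfy]. apply Rnot_lt_le. intros Hlt.
      assert (y <= al) by (apply Hub; split; assumption).
      assert (Hfy' := Hclose y ltac:(apply Rabs_def1; lra)). apply Rabs_def2 in Hfy'. lra. }
    specialize (Hlub _ Hu). lra. }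
  assert (Hlt : al < x0) by (destruct (Req_dec al x0) as [->|]; lra).
  exists al. split; [lra|split; [|exact Hneg]].
  apply Rle_antisym; [|exact Hge]. apply Rnot_lt_le. intros Hfal.
  destruct (continuous_eps_delta f al (Hf al) (f al) Hfal) as [d [Hd Hclose]].
  set (y := Rmin (al + d / 2) x0).
  assert (Hy : al < y <= x0 /\ y <= al + d / 2)
    by (unfold y; split; [split; [apply Rmin_glb_lt|apply Rmin_r]|apply Rmin_l]; lra).
  assert (Hfy := Hclose y ltac:(apply Rabs_def1; lra)). apply Rabs_def2 in Hfy.
  assert (f y < 0) by (apply Hneg; lra). lra.
Qed.

Lemma first_zero_after (f : R -> R) x0 hi : C0 f -> x0 < hi -> 0 <= f hi -> f x0 < 0 ->
  exists be, x0 < be <= hi /\ f be = 0 /\ forall y, x0 <= y < be -> f y < 0.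
Proof.
  intros Hf Hhi Hfhi Hfx0.
  assert (Hg : C0 (fun y => f (- y))).
  { assert (Hopp : C0 (fun y => - y))
      by (apply (C0_of_derive _ (fun _ => -1)); intros; auto_derive; [exact I|ring]).
    intros y. apply (continuous_comp (fun y => - y) f); [apply Hopp|apply Hf]. }
  destruct (last_zero_before (fun y => f (- y)) (- hi) (- x0) Hg) as [al [Hal [Hz Hneg]]];
    rewrite ?Ropp_involutive; try lra.
  exists (- al). split; [lra|split; [exact Hz|]].
  intros y Hy. rewrite <- (Ropp_involutive y). apply Hneg. lra.
Qed.

Lemma particular_solution_zero c al x : particular_solution c (fun _ => 0) al x = 0.
Proof.
  unfold particular_solution, weighted_primitive.
  rewrite (RInt_ext _ (fun _ => 0)), RInt_const_R; [R_eq; ring|].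
  intros s _. rewrite (RInt_ext _ (fun _ => 0)), RInt_const_R; [R_eq; ring|]. intros; R_eq; ring.
Qed.

(* On a maximal interval where [u < 0] the equation is homogeneous, so [u] is a
   combination of [1] and [homogeneous_solution] vanishing at both ends. *)
Lemma weak_solution_nonneg c (u F ut : R -> R) lo hi :
  C0 ut -> (forall x, lo <= x <= hi -> u x = ut x) -> weak_solution c u F lo hi ->
  (forall x, lo <= x <= hi -> ut x < 0 -> F x = 0) ->
  0 <= ut lo -> 0 <= ut hi -> forall x, lo <= x <= hi -> 0 <= ut x.
Proof.
  intros Hut Hu Hweak HF Hlo Hhi x0 Hx0. apply Rnot_lt_le. intros Hneg.
  assert (Hx0' : lo < x0 < hi) by (destruct Hx0 as [[|] [|]]; subst; lra).
  destruct (last_zero_before ut lo x0 Hut) as [al [Hal [Hzal Hnegal]]]; try lra.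
  destruct (first_zero_after ut x0 hi Hut) as [be [Hbe [Hzbe Hnegbe]]]; try lra.
  assert (Hweak' : weak_solution_RInt c ut (fun _ => 0) al be).
  { apply (weak_solution_restrict c u F ut _ lo hi); try (assumption || lra); [solve_C0|].
    intros x Hx. apply HF; [lra|]. destruct (Rle_dec x x0); [apply Hnegal|apply Hnegbe]; lra. }
  destruct (weak_solution_representation c al be ut (fun _ => 0) ltac:(lra) Hut ltac:(solve_C0) Hweak')
    as [A [B HAB]].
  rewrite (HAB al), (HAB be), particular_solution_zero in *; try lra.
  rewrite (HAB x0), particular_solution_zero in Hneg by lra.
  assert (Hk := homogeneous_solution_lt c al be ltac:(lra)).
  assert (HB : B = 0) by nra. subst B. lra.
Qed.

Lemma weak_solution_positive c (u F ut G : R -> R) lo hi K :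
  lo < hi -> C0 ut -> C0 G -> 0 <= K ->
  (forall x, lo <= x <= hi -> u x = ut x) -> weak_solution c u F lo hi ->
  (forall x, lo < x < hi -> F x = G x) ->
  (forall x, lo <= x <= hi -> 0 <= ut x) -> (forall x, lo <= x <= hi -> - K * ut x <= G x) ->
  0 < ut lo -> forall x, lo < x < hi -> 0 < ut x.
Proof.
  intros Hlohi Hut HG HK Hu Hweak HF Hnonneg HGlow Hlo.
  destruct (weak_solution_representation c lo hi ut G Hlohi Hut HG) as [A [B Hrep]].
  - apply (weak_solution_restrict c u F ut G lo hi); auto; lra.
  - exact (positivity_propagation c lo hi A B K ut G Hut HG HK Hrep Hnonneg HGlow Hlo).
Qed.

(** * The localized problem *)

Lemma f_w_lower_bound mu w m M : 0 <= mu -> 0 <= w -> 0 <= m -> w + m <= M ->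
  - (M + mu) * w <= f_w mu w m.
Proof.
  intros Hmu Hw Hm HM. unfold f_w.
  assert (w * (w + m) <= w * M) by (apply Rmult_le_compat_l; lra).
  assert (0 <= mu * m) by (apply Rmult_le_pos; lra).
  nra.
Qed.

Lemma f_m_lower_bound r K mu w m M : 0 <= r -> 0 < K -> 0 <= mu -> 0 <= w -> 0 <= m ->
  w + m <= M -> - (r * (M / K) + mu) * m <= f_m r K mu w m.
Proof.
  intros Hr HK Hmu Hw Hm HM. unfold f_m.
  assert (Hq : (w + m) / K <= M / K) by (apply Rmult_le_compat_r; [left; apply Rinv_0_lt_compat|]; lra).
  assert (r * m * ((w + m) / K) <= r * m * (M / K)) by (apply Rmult_le_compat_l; [apply Rmult_le_pos|]; lra).
  assert (0 <= mu * w) by (apply Rmult_le_pos; lra).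
  nra.
Qed.

Lemma chi_nonneg_of_nonneg y : 0 <= y -> chi_nonneg y = 1.
Proof. intros Hy. unfold chi_nonneg. destruct Rle_dec; lra. Qed.

Lemma chi_nonneg_of_neg y : y < 0 -> chi_nonneg y = 0.
Proof. intros Hy. unfold chi_nonneg. destruct Rle_dec; lra. Qed.

Section LocalizedProblem.

Variables (r K mu ws ms a c : R) (w m : R -> R).
Hypothesis Ha : 0 < a.
Hypothesis Hsol : solves_Pa r K mu ws ms a c w m.

Let wt (x : R) : R := w (clamp (- a) a x).
Let mt (x : R) : R := m (clamp (- a) a x).

Lemma C0_wt : C0 wt.
Proof. apply C0_clamp; [lra|apply Hsol]. Qed.

Lemma C0_mt : C0 mt.
Proof. apply C0_clamp; [lra|apply Hsol]. Qed.

Lemma wt_eq x : - a <= x <= a -> w x = wt x.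
Proof. intros Hx. unfold wt. rewrite clamp_id; auto. Qed.

Lemma mt_eq x : - a <= x <= a -> m x = mt x.
Proof. intros Hx. unfold mt. rewrite clamp_id; auto. Qed.

Lemma Pa_nonneg : 0 <= ws -> 0 <= ms -> forall x, - a <= x <= a -> 0 <= wt x /\ 0 <= mt x.
Proof.
  intros Hws Hms. destruct Hsol as [_ [_ [Hww [Hwm [Hw0 [Hm0 [Hwa Hma]]]]]]].
  intros x Hx. split.
  - refine (weak_solution_nonneg c w _ wt (- a) a C0_wt wt_eq Hww _ _ _ x Hx);
      try (rewrite <- wt_eq; lra).
    intros y Hy Hneg. rewrite (chi_nonneg_of_neg (w y)) by (rewrite wt_eq; auto). ring.
  - refine (weak_solution_nonneg c m _ mt (- a) a C0_mt mt_eq Hwm _ _ _ x Hx);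
      try (rewrite <- mt_eq; lra).
    intros y Hy Hneg. rewrite (chi_nonneg_of_neg (m y)) by (rewrite mt_eq; auto). ring.
Qed.

Lemma Pa_positive : 0 <= r -> 0 < K -> 0 <= mu -> 0 < ws -> 0 < ms ->
  forall x, - a < x < a -> 0 < w x /\ 0 < m x.
Proof.
  intros Hr HK Hmu Hws Hms.
  assert (Hnn := Pa_nonneg ltac:(lra) ltac:(lra)).
  destruct Hsol as [_ [_ [Hww [Hwm [Hw0 [Hm0 _]]]]]].
  assert (C0w := C0_wt). assert (C0m := C0_mt).
  destruct (C0_max_on (fun x => wt x + mt x) (- a) a ltac:(lra) ltac:(solve_C0)) as [xM [HxM HM]].
  set (M := wt xM + mt xM).
  assert (HM0 : 0 <= M) by (pose proof (Hnn xM HxM); unfold M; lra).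
  assert (Hchi : forall x, - a < x < a -> chi_nonneg (w x) * chi_nonneg (m x) = 1).
  { intros x Hx. rewrite wt_eq, mt_eq by lra.
    rewrite !chi_nonneg_of_nonneg by (apply (Hnn x); lra). ring. }
  intros x Hx. rewrite wt_eq, mt_eq by lra. split.
  - refine (weak_solution_positive c w _ wt (fun x => f_w mu (wt x) (mt x)) (- a) a (M + mu)
              ltac:(lra) C0w _ ltac:(lra) wt_eq Hww _ _ _ _ x Hx).
    + unfold f_w. solve_C0.
    + intros y Hy. rewrite Rmult_assoc, Hchi, wt_eq, mt_eq by lra. ring.
    + intros y Hy. apply Hnn, Hy.
    + intros y Hy. pose proof (Hnn y Hy). apply f_w_lower_bound; try lra. apply HM, Hy.
    + rewrite <- wt_eq by lra. lra.
  - refine (weak_solution_positive c m _ mt (fun x => f_m r K mu (wt x) (mt x)) (- a) a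
              (r * (M / K) + mu) ltac:(lra) C0m _ _ mt_eq Hwm _ _ _ _ x Hx).
    + unfold f_m, Rdiv. solve_C0.
    + assert (0 <= r * (M / K)) by (apply Rmult_le_pos; [|apply Rdiv_le_0_compat]; lra). lra.
    + intros y Hy. rewrite Rmult_assoc, Hchi, wt_eq, mt_eq by lra. ring.
    + intros y Hy. apply Hnn, Hy.
    + intros y Hy. pose proof (Hnn y Hy). apply f_m_lower_bound; try lra. apply HM, Hy.
    + rewrite <- mt_eq by lra. lra.
Qed.

End LocalizedProblem.

Theorem mainTheorem4 (r K mu ws ms a c : R) (w m : R -> R) :
  assumption1 r K mu ->
  is_coexistence_state r K mu ws ms ->
  0 < a ->
  solves_Pa r K mu ws ms a c w m ->
  forall x, - a <= x < a -> 0 < w x /\ 0 < m x.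
Proof.
  intros Hass Hco Ha Hsol x Hx.
  destruct Hass as [Hr [Hmu [_ [_ [_ [_ [HK _]]]]]]].
  destruct Hco as [[[Hws _] [[Hms _] _]] _].
  destruct (Req_dec x (- a)) as [->|Hxa].
  - destruct Hsol as [_ [_ [_ [_ [-> [-> _]]]]]]. lra.
  - apply (Pa_positive r K mu ws ms a c w m Ha Hsol); lra.
Qed.
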